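(* Let $A$ be the free $\mathbb{Z}$-module with basis $e_1,\dots,e_n,f_1,\dots,f_n,g_1,\dots,g_n$. For $i=1,\dots,n-1$ define automorphisms $\Delta(\sigma_i):e_i\mapsto e_{i+1}+g_i,\ e_{i+1}\mapsto e_i-g_{i+1},\ g_i\mapsto g_{i+1},\ g_{i+1}\mapsto g_i$ and $\Delta(\rho_i):e_i\leftrightarrow e_{i+1},\ f_i\leftrightarrow f_{i+1},\ g_i\leftrightarrow g_{i+1}$ (swaps), all other basis elements fixed. Then this extends to a linear representation $\Delta:FVB_n\to{\rm Aut}(A)={\rm GL}_{3n}(\mathbb{Z})$. Moreover, $\Delta$ does not preserve the forbidden relations (for $n\ge3$ and $i=1,\dots,n-2$, $\Delta(\rho_i\sigma_{i+1}\sigma_i)\ne\Delta(\sigma_{i+1}\sigma_i\rho_{i+1})$), and for $i=1,\dots,n-2$ the elements $(\rho_i\sigma_{i+1})^6$ do not belong to $\ker(\Delta)$.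
   Context: $FVB_n$ is the flat virtual braid group: generators $\sigma_1,\dots,\sigma_{n-1},\rho_1,\dots,\rho_{n-1}$, relations $\sigma_i\sigma_j=\sigma_j\sigma_i$, $\rho_i\rho_j=\rho_j\rho_i$, $\sigma_i\rho_j=\rho_j\sigma_i$ for $|i-j|\ge2$; $\sigma_i\sigma_{i+1}\sigma_i=\sigma_{i+1}\sigma_i\sigma_{i+1}$; $\rho_i\rho_{i+1}\rho_i=\rho_{i+1}\rho_i\rho_{i+1}$; $\rho_i\rho_{i+1}\sigma_i=\sigma_{i+1}\rho_i\rho_{i+1}$; $\rho_i^2=\sigma_i^2=1$. The forbidden relations are $\rho_i\sigma_{i+1}\sigma_i=\sigma_{i+1}\sigma_i\rho_{i+1}$. Maps are composed on the right: $(fg)(x)=g(f(x))$. *)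

From mathcomp Require Import all_boot all_order all_algebra.
Set Implicit Arguments. Unset Strict Implicit. Unset Printing Implicit Defensive.
Import GRing.Theory Num.Theory.
Local Open Scope ring_scope.

(* Basis of A = Z^(3n), indexed by 0..3n-1 (1-based paper indices k = 1..n):
   e_k |-> k-1,  f_k |-> n+k-1,  g_k |-> 2n+k-1.
   Endomorphisms act on ROW vectors: row r of the matrix is the image of the
   r-th basis vector.  Hence M_f *m M_g is the matrix of "first f, then g",
   matching the convention (fg)(x) = g(f(x)). *)
Definition idxE (n k : nat) : nat := k.-1.
Definition idxF (n k : nat) : nat := n + k.-1.
Definition idxG (n k : nat) : nat := n + n + k.-1.

Definition bit (b : bool) : int := (nat_of_bool b)%:Z.

Definition sigma_coef (n i r c : nat) : int :=
  if r == idxE n i then bit (c == idxE n i.+1) + bit (c == idxG n i)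
  else if r == idxE n i.+1 then bit (c == idxE n i) - bit (c == idxG n i.+1)
  else if r == idxG n i then bit (c == idxG n i.+1)
  else if r == idxG n i.+1 then bit (c == idxG n i)
  else bit (c == r).

Definition rho_perm (n i r : nat) : nat :=
  if r == idxE n i then idxE n i.+1
  else if r == idxE n i.+1 then idxE n i
  else if r == idxF n i then idxF n i.+1
  else if r == idxF n i.+1 then idxF n i
  else if r == idxG n i then idxG n i.+1
  else if r == idxG n i.+1 then idxG n i
  else r.

Definition rho_coef (n i r c : nat) : int := bit (c == rho_perm n i r).

Definition DSigma (n i : nat) : 'M[int]_(3 * n) :=
  \matrix_(r, c) sigma_coef n i r c.
Definition DRho (n i : nat) : 'M[int]_(3 * n) :=
  \matrix_(r, c) rho_coef n i r c.

Definition mx_pow6 (m : nat) (P : 'M[int]_m) : 'M[int]_m :=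
  P *m P *m P *m P *m P *m P.

Definition is_FVB_rep (n : nat) (S R : nat -> 'M[int]_(3 * n)) : Prop :=
  (forall i, (1 <= i)%N -> (i < n)%N -> S i \in unitmx /\ R i \in unitmx) /\
  (forall i j, (1 <= i)%N -> (i < n)%N -> (1 <= j)%N -> (j < n)%N -> ((i.+1 < j) || (j.+1 < i))%N ->
      [/\ S i *m S j = S j *m S i,
          R i *m R j = R j *m R i &
          S i *m R j = R j *m S i]) /\
  (forall i, (1 <= i)%N -> (i.+1 < n)%N ->
      [/\ S i *m S i.+1 *m S i = S i.+1 *m S i *m S i.+1,
          R i *m R i.+1 *m R i = R i.+1 *m R i *m R i.+1 &
          R i *m R i.+1 *m S i = S i.+1 *m R i *m R i.+1]) /\
  (forall i, (1 <= i)%N -> (i < n)%N -> R i *m R i = 1%:M /\ S i *m S i = 1%:M).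

From mathcomp Require Import all_boot all_order all_algebra zify.
Import GRing.Theory.
Local Open Scope ring_scope.

(* Every matrix identity is checked row by row on the basis: a generator sends
   a basis row to a combination of at most two basis rows, so each relation
   reduces to finitely many comparisons of indices, uniformly in n.
   The forbidden relation fails on f_i, which the left-hand side sends to
   f_{i+1} and the right-hand side fixes.  For tau = rho_i sigma_{i+1}, tau
   permutes g_i, g_{i+1}, g_{i+2} cyclically and tau^3 sends e_i to
   e_i + g_{i+2} - g_{i+1}, so tau^6 sends e_i to e_i + 2 (g_{i+2} - g_{i+1}). *)

Section BasisRows.
Variables (R : pzSemiRingType) (m : nat).

Definition basis_row (k : nat) : 'rV[R]_m := \row_c ((c : nat) == k)%:R.

Lemma basis_row_mul_matrix k (f : nat -> nat -> R) : (k < m)%N ->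
  basis_row k *m (\matrix_(r, c) f r c : 'M_m) = \row_c f k c.
Proof.
move=> lt_km; apply/rowP => c.
rewrite !mxE (bigD1 (Ordinal lt_km)) //= !mxE eqxx mul1r big1 ?addr0 // => j ne_jk.
rewrite !mxE; suff /negbTE-> : (j : nat) != k by rewrite mul0r.
by apply: contra ne_jk => /eqP eq_jk; apply/eqP/val_inj.
Qed.

Lemma delta_mx_basis_row (k : 'I_m) : delta_mx 0 k = basis_row k.
Proof. by apply/rowP => c; rewrite !mxE. Qed.

Lemma matrix_eq_on_basis_rows n (A B : 'M[R]_(m, n)) :
  (forall k, (k < m)%N -> basis_row k *m A = basis_row k *m B) -> A = B.
Proof.
by move=> eqAB; apply/row_matrixP => k; rewrite !rowE delta_mx_basis_row eqAB.
Qed.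

End BasisRows.

Lemma basis_row_inj (R : nzSemiRingType) m k l : (k < m)%N ->
  basis_row R m k = basis_row R m l -> k = l.
Proof.
move=> lt_km /rowP/(_ (Ordinal lt_km)); rewrite !mxE eqxx /=.
by case: eqP => // _ /eqP; rewrite mulr1n mulr0n oner_eq0.
Qed.

Lemma bitE b : bit b = b%:R.
Proof. by rewrite natz. Qed.

Section GeneratorImages.
Variable n : nat.
Local Notation e := (@basis_row int (3 * n)).

Lemma basis_row_mulDSigma i k : (k < 3 * n)%N ->
  e k *m DSigma n i =
  if k == idxE n i then e (idxE n i.+1) + e (idxG n i)
  else if k == idxE n i.+1 then e (idxE n i) - e (idxG n i.+1)
  else if k == idxG n i then e (idxG n i.+1)
  else if k == idxG n i.+1 then e (idxG n i)
  else e k.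
Proof.
move=> lt_k; rewrite basis_row_mul_matrix //; apply/rowP => c.
by rewrite !mxE /sigma_coef; do 4 (case: ifP => _; rewrite ?mxE ?bitE //).
Qed.

Lemma basis_row_mulDRho i k : (k < 3 * n)%N ->
  e k *m DRho n i = e (rho_perm n i k).
Proof.
move=> lt_k; rewrite basis_row_mul_matrix //.
by apply/rowP => c; rewrite !mxE /rho_coef bitE.
Qed.

End GeneratorImages.

(* Disequalities are cleared before calling lia, which would case split on
   each of them. *)
Ltac clear_disequalities := repeat match goal with H : _ <> _ |- _ => clear H end.

Ltac index_lia := clear_disequalities; unfold idxE, idxF, idxG in *; lia.

Ltac decide_index_test :=
  match goal with |- context[if ?a == ?b then _ else _] =>
    first [ rewrite (_ : (a == b) = false); last by apply/negbTE/eqP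
          | rewrite (_ : (a == b) = true); last by apply/eqP; index_lia
          | rewrite (_ : (a == b) = false); last by apply/negbTE/eqP; index_lia
          | case: (eqVneq a b) => [? | /eqP ?]; [subst a |] ]
  end.

Ltac push_basis_row :=
  match goal with
  | |- context[basis_row _ _ ?k *m DSigma ?n ?i] =>
      rewrite (@basis_row_mulDSigma n i k); last by index_lia
  | |- context[basis_row _ _ ?k *m DRho ?n ?i] =>
      rewrite (@basis_row_mulDRho n i k) /rho_perm; last by index_lia
  end.

Ltac eval_on_basis_rows :=
  rewrite ?mulmxA;
  repeat (rewrite ?mulmxDl ?mulmxBl ?mulNmx; push_basis_row;
          repeat decide_index_test).

Ltac compare_entries :=
  apply/rowP => c; rewrite !mxE; clear_disequalities; lia.

Ltac check_on_basis_rows :=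
  apply: matrix_eq_on_basis_rows => k lt_k; rewrite ?mulmx1;
  eval_on_basis_rows; compare_entries.

Lemma DSigma_sq n i : (0 < i)%N -> (i < n)%N -> DSigma n i *m DSigma n i = 1%:M.
Proof. by move=> i_gt0 lt_in; check_on_basis_rows. Qed.

Lemma DRho_sq n i : (0 < i)%N -> (i < n)%N -> DRho n i *m DRho n i = 1%:M.
Proof. by move=> i_gt0 lt_in; check_on_basis_rows. Qed.

Lemma DSigma_DRho_far_commute n i j :
  (0 < i)%N -> (i < n)%N -> (0 < j)%N -> (j < n)%N -> ((i.+1 < j) || (j.+1 < i))%N ->
  [/\ DSigma n i *m DSigma n j = DSigma n j *m DSigma n i,
      DRho n i *m DRho n j = DRho n j *m DRho n i &
      DSigma n i *m DRho n j = DRho n j *m DSigma n i].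
Proof.
by move=> i_gt0 lt_in j_gt0 lt_jn /orP[] far_ij; split; check_on_basis_rows.
Qed.

Lemma DSigma_DRho_braid n i : (0 < i)%N -> (i.+1 < n)%N ->
  [/\ DSigma n i *m DSigma n i.+1 *m DSigma n i =
        DSigma n i.+1 *m DSigma n i *m DSigma n i.+1,
      DRho n i *m DRho n i.+1 *m DRho n i = DRho n i.+1 *m DRho n i *m DRho n i.+1 &
      DRho n i *m DRho n i.+1 *m DSigma n i = DSigma n i.+1 *m DRho n i *m DRho n i.+1].
Proof. by move=> i_gt0 lt_i1n; split; check_on_basis_rows. Qed.

Section ForbiddenRelations.
Variables n i : nat.
Hypotheses (i_gt0 : (0 < i)%N) (lt_i1n : (i.+1 < n)%N).
Local Notation e := (@basis_row int (3 * n)).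
Local Notation tau := (DRho n i *m DSigma n i.+1).

Lemma forbidden_relation_fails :
  DRho n i *m DSigma n i.+1 *m DSigma n i <> DSigma n i.+1 *m DSigma n i *m DRho n i.+1.
Proof.
move=> forbidden; have := congr1 (mulmx (e (idxF n i))) forbidden.
by eval_on_basis_rows => /basis_row_inj; index_lia.
Qed.

Lemma rho_sigma_cube_idxE :
  e (idxE n i) *m (tau *m tau *m tau) = e (idxE n i) + e (idxG n i.+2) - e (idxG n i.+1).
Proof. by eval_on_basis_rows; compare_entries. Qed.

Lemma rho_sigma_cube_idxG j : (i <= j <= i.+2)%N ->
  e (idxG n j) *m (tau *m tau *m tau) = e (idxG n j).
Proof.
move=> /andP[le_ij le_j2]; have [->|[->|->]] : j = i \/ j = i.+1 \/ j = i.+2 by lia.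
all: by eval_on_basis_rows; compare_entries.
Qed.

Lemma DRho_DSigma_pow6_neq1 : mx_pow6 tau <> 1%:M.
Proof.
move=> tau6; have := congr1 (mulmx (e (idxE n i))) tau6.
have -> : mx_pow6 tau = (tau *m tau *m tau) *m (tau *m tau *m tau).
  by rewrite /mx_pow6 !mulmxA.
set tau3 := tau *m tau *m tau.
rewrite mulmxA mulmx1 rho_sigma_cube_idxE mulmxBl mulmxDl rho_sigma_cube_idxE.
rewrite !rho_sigma_cube_idxG; [| lia ..].
have lt_g : (idxG n i.+1 < 3 * n)%N by index_lia.
by move/rowP/(_ (Ordinal lt_g)); rewrite !mxE /=; index_lia.
Qed.

End ForbiddenRelations.

Theorem theorem3 (n : nat) :
  is_FVB_rep (DSigma n) (DRho n) /\
  (forall i, (1 <= i)%N -> (i.+1 < n)%N ->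
     DRho n i *m DSigma n i.+1 *m DSigma n i <>
     DSigma n i.+1 *m DSigma n i *m DRho n i.+1) /\
  (forall i, (1 <= i)%N -> (i.+1 < n)%N ->
     mx_pow6 (DRho n i *m DSigma n i.+1) <> 1%:M).
Proof.
split; [split; [|split; [|split]] | split].
- move=> i i_gt0 lt_in; split.
  + by have [] := mulmx1_unit (DSigma_sq n i i_gt0 lt_in).
  + by have [] := mulmx1_unit (DRho_sq n i i_gt0 lt_in).
- exact: DSigma_DRho_far_commute.
- exact: DSigma_DRho_braid.
- by move=> i i_gt0 lt_in; rewrite DRho_sq ?DSigma_sq.
- exact: forbidden_relation_fails.
- exact: DRho_DSigma_pow6_neq1.
Qed.
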